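(* Let $m\ge 2$ be an integer and let $c>1$ be a real number which is not an integer. Then the sequence $x=(\lfloor n^c\rfloor \bmod m)_{n}$ is not normal. More precisely, there exist a positive integer $k$ and a block $B\in\{0,1,\ldots,m-1\}^k$ which does not appear in $x$ (i.e. there is no $n$ with $(x_n,x_{n+1},\ldots,x_{n+k-1})=B$).
   Context: A sequence $(v_n)_n$ with values in $\{0,1,\ldots,m-1\}$ is called $k$-normal if for every block $B\in\{0,\ldots,m-1\}^k$ one has $\lim_{N\to\infty}\frac1N\operatorname{Card}\{n<N: (v_n,\ldots,v_{n+k-1})=B\}=m^{-k}$; it is called normal if it is $k$-normal for every positive integer $k$. *)

From Stdlib Require Import Reals ZArith Arith List.
Open Scope R_scope.

(* n^c for a natural n and real exponent c, with the convention 0^c = 0 (c > 0). *)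
Definition npow (n : nat) (c : R) : R :=
  match n with O => 0 | S _ => Rpower (INR n) c end.

Definition rfloor (x : R) : Z := Int_part x.

Definition floor_pow_mod (m : nat) (c : R) (n : nat) : nat :=
  Z.to_nat (Z.modulo (rfloor (npow n c)) (Z.of_nat m)).

Definition occursb (v : nat -> nat) (B : list nat) (n : nat) : bool :=
  forallb (fun i => Nat.eqb (v (n + i)%nat) (nth i B 0%nat)) (seq 0 (length B)).

Definition block_count (v : nat -> nat) (B : list nat) (N : nat) : nat :=
  length (filter (occursb v B) (seq 0 N)).

Definition is_block (m k : nat) (B : list nat) : Prop :=
  length B = k /\ Forall (fun b => (b < m)%nat) B.

Definition k_normal (m k : nat) (v : nat -> nat) : Prop :=
  forall B, is_block m k B ->
    Un_cv (fun N => INR (block_count v B N) / INR N) (/ (INR m ^ k)).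

Definition normal (m : nat) (v : nat -> nat) : Prop :=
  forall k, (0 < k)%nat -> k_normal m k v.

From Stdlib Require Import Reals ZArith Arith List.
From Stdlib Require Import Lia Lra Classical.
Import ListNotations.
Close Scope R_scope.

(* Let [d = floor c] and fix a window of length [L = r T].  For large [n] the
   [(d+1)]-th differences of [k |-> (n + k) ^ c] lie in [(0, tau]], so on the window
   this sequence is approximated within [W] by the integer difference table started
   from its first [d + 1] differences, scaled by [M] and rounded; reduced mod [m M],
   these leave at most [(m M) ^ (d + 1)] possibilities.  The table fixes the floor,
   hence the digit mod [m], except at "ambiguous" positions where an integer lies
   within [2 W]; there one bit, the side of that integer, is needed.  On a segment of
   [r] ambiguous positions, subtracting the nearby integers does not change the
   [(d+1)]-th differences (an integer sequence within [2 W] of the real one has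
   [(d+1)]-th differences below [1], hence zero), so the bits are the signs of a
   sequence with nonnegative [(d+1)]-th differences and change at most [d + 1]
   times.  Hence beyond some point at most [(m M) ^ (d + 1) * 2 ^ ((r - 1) T)]
   blocks of length [r T] occur, and for [M] polynomial in [L] and [r], [T] large
   this is less than [m ^ (r T)].  A block missing beyond [N0] is then prolonged
   into a block missing everywhere. *)

(** * Sign changes and words *)

Fixpoint sign_changes (s : list bool) : nat :=
  match s with
  | x :: (y :: _) as t => (if Bool.eqb x y then 0 else 1) + sign_changes t
  | _ => 0
  end.

Lemma sign_changes_cons_cons x y t :
  sign_changes (x :: y :: t) = (if Bool.eqb x y then 0 else 1) + sign_changes (y :: t).
Proof. reflexivity. Qed.

Lemma sign_changes_cons_le x t : sign_changes (x :: t) <= 1 + sign_changes t.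
Proof. destruct t as [|y t]; simpl; [lia|]. destruct (Bool.eqb x y); lia. Qed.

Lemma sign_changes_skip x y t : sign_changes (x :: t) <= sign_changes (x :: y :: t).
Proof. destruct t as [|z t]; simpl; [lia|]. destruct x, y, z; simpl; lia. Qed.

Lemma sign_changes_const s : (forall x, In x s -> x = true) -> sign_changes s = 0.
Proof.
  induction s as [|x [|y s] IH]; intros Hs; [reflexivity|reflexivity|].
  rewrite sign_changes_cons_cons, IH by (intros z Hz; apply Hs; right; exact Hz).
  now rewrite (Hs x), (Hs y) by (simpl; auto).
Qed.

(* A discrete Rolle theorem: [x :: s] are the signs of a sequence, [t] those of
   its increments, and the increment between two entries of opposite signs has the
   sign of the later one. *)
Lemma sign_changes_rolle s t x :
  length t = length s ->
  (forall i, i < length s -> nth i (x :: s) false <> nth i s false ->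
     nth i t false = nth i s false) ->
  sign_changes (x :: s) <= sign_changes (x :: t).
Proof.
  revert t x; induction s as [|y s IH]; intros [|z t] x Hl Hfollow; simpl in Hl; try lia.
  assert (IHs : sign_changes (y :: s) <= sign_changes (y :: t)).
  { apply IH; [lia|]. intros i Hi Hne. apply (Hfollow (S i)); simpl; [lia|exact Hne]. }
  destruct (Bool.eqb x y) eqn:Exy.
  - apply Bool.eqb_prop in Exy; subst y.
    rewrite sign_changes_cons_cons, Bool.eqb_reflx.
    etransitivity; [exact IHs|apply sign_changes_skip].
  - assert (z = y) as ->.
    { apply (Hfollow 0); simpl; [lia|]. intros ->. now rewrite Bool.eqb_reflx in Exy. }
    rewrite !sign_changes_cons_cons, Exy. lia.
Qed.

(* Contains every boolean list of length [r + 1] (not [r], so that the head is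
   defined) with at most [j] sign changes. *)
Fixpoint few_changes (r j : nat) : list (list bool) :=
  match r with
  | O => [[true]; [false]]
  | S r' =>
      map (fun w => hd true w :: w) (few_changes r' j) ++
      match j with
      | O => []
      | S j' => map (fun w => negb (hd true w) :: w) (few_changes r' j')
      end
  end.

Lemma in_few_changes r j v :
  length v = S r -> sign_changes v <= j -> In v (few_changes r j).
Proof.
  revert j v; induction r as [|r IH]; intros j v Hl Hc.
  - destruct v as [|[] [|]]; simpl in *; auto; lia.
  - destruct v as [|x [|y w]]; simpl in Hl; try lia.
    rewrite sign_changes_cons_cons in Hc. cbn [few_changes]. apply in_or_app.
    destruct (Bool.eqb x y) eqn:Exy.
    + apply Bool.eqb_prop in Exy; subst x. left.
      apply (in_map (fun w => hd true w :: w) _ (y :: w)), IH; cbn [length] in *; lia.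
    + right. destruct j as [|j]; [lia|].
      replace x with (negb y) by (destruct x, y; simpl in *; congruence).
      apply (in_map (fun w => negb (hd true w) :: w) _ (y :: w)), IH; cbn [length] in *; lia.
Qed.

Lemma length_few_changes r j : length (few_changes r j) <= 2 * S r ^ j.
Proof.
  revert j; induction r as [|r IH]; intros j; simpl few_changes.
  - rewrite Nat.pow_1_l. simpl. lia.
  - rewrite length_app, length_map. destruct j as [|j].
    + specialize (IH 0). simpl in *. lia.
    + rewrite length_map. pose proof (IH (S j)). pose proof (IH j).
      pose proof (Nat.pow_le_mono_l (S r) (S (S r)) j ltac:(lia)).
      rewrite !Nat.pow_succ_r' in *. nia.
Qed.

Fixpoint words {X : Type} (A : list X) (n : nat) : list (list X) :=
  match n with
  | O => [[]]
  | S n' => flat_map (fun w => map (fun a => a :: w) A) (words A n')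
  end.

Lemma in_words {X : Type} (A : list X) n w :
  In w (words A n) <-> length w = n /\ (forall a, In a w -> In a A).
Proof.
  revert w; induction n as [|n IH]; intros w; simpl.
  - split; [intros [<-|[]]; split; simpl; tauto|].
    intros [Hl _]. destruct w; [auto|discriminate].
  - rewrite in_flat_map. split.
    + intros (u & Hu & Hw). apply IH in Hu as [Hl HA].
      apply in_map_iff in Hw as (a & <- & Ha). simpl. split; [lia|].
      intros b [<-|Hb]; auto.
    + intros [Hl HA]. destruct w as [|a u]; [discriminate|].
      exists u. split.
      * apply IH. split; [simpl in Hl; lia|]. intros b Hb. apply HA. now right.
      * apply in_map_iff. exists a. split; [reflexivity|]. apply HA. now left.
Qed.

Lemma length_words {X : Type} (A : list X) n : length (words A n) = length A ^ n.
Proof.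
  induction n as [|n IH]; [reflexivity|]. simpl.
  rewrite <- IH, flat_map_concat_map. clear IH.
  induction (words A n); simpl; [lia|]. rewrite length_app, length_map. lia.
Qed.

Lemma NoDup_words {X : Type} (A : list X) n : NoDup A -> NoDup (words A n).
Proof.
  intros HA. induction n as [|n IH]; simpl; [repeat constructor; intros []|].
  induction IH as [|w ws Hw Hws IHws]; simpl; [constructor|].
  apply NoDup_app; [|exact IHws|].
  - apply NoDup_map_NoDup_ForallPairs; [|exact HA]. intros a b _ _ E. now injection E.
  - intros x Hx1 Hx2. apply in_map_iff in Hx1 as (a & <- & _).
    apply in_flat_map in Hx2 as (w' & Hw' & Hin).
    apply in_map_iff in Hin as (a' & E & _). injection E as _ <-. contradiction.
Qed.

Lemma exists_word_not_in {X : Type} (A : list X) n (l : list (list X)) :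
  NoDup A -> length l < length A ^ n -> exists w, In w (words A n) /\ ~ In w l.
Proof.
  intros HA Hl. apply NNPP. intros Hnone.
  assert (Hincl : incl (words A n) l).
  { intros w Hw. apply NNPP. intros Hwl. apply Hnone. now exists w. }
  pose proof (NoDup_incl_length (NoDup_words A n HA) Hincl).
  rewrite length_words in *. lia.
Qed.

Definition with_false_at (i r : nat) : list (list bool) :=
  map (fun u => firstn i u ++ false :: skipn i u) (words [true; false] (r - 1)).

Lemma length_with_false_at i r : length (with_false_at i r) = 2 ^ (r - 1).
Proof. unfold with_false_at. now rewrite length_map, length_words. Qed.

Lemma in_with_false_at i r v :
  length v = r -> i < r -> nth i v true = false -> In v (with_false_at i r).
Proof.
  intros Hl Hi Hv. destruct (nth_split v true (n := i) ltac:(lia)) as (l1 & l2 & Ev & Hl1).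
  rewrite Hv in Ev. subst v. rewrite length_app in Hl. simpl in Hl.
  apply in_map_iff. exists (l1 ++ l2). split.
  - rewrite firstn_app, skipn_app, <- Hl1, Nat.sub_diag, firstn_all, skipn_all. simpl.
    now rewrite app_nil_r.
  - apply in_words. split; [rewrite length_app; lia|]. intros [|] _; simpl; auto.
Qed.

Lemma nth_map_seq {A : Type} (f : nat -> A) a n i x :
  (i < n)%nat -> nth i (map f (seq a n)) x = f (a + i)%nat.
Proof.
  intros Hi. rewrite (nth_indep _ x (f 0%nat)) by (rewrite length_map, length_seq; lia).
  rewrite map_nth, seq_nth by lia. reflexivity.
Qed.

(** * Finite differences *)

Open Scope R_scope.

Fixpoint fdiff (j : nat) (h : nat -> R) (k : nat) : R :=
  match j with
  | O => h k
  | S j' => fdiff j' h (S k) - fdiff j' h k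
  end.

Lemma fdiff_ext j h1 h2 k : (forall i, h1 i = h2 i) -> fdiff j h1 k = fdiff j h2 k.
Proof. intros Heq. revert k; induction j; intros k; simpl; rewrite ?IHj; auto. Qed.

Lemma fdiff_succ j h k : fdiff (S j) h k = fdiff j (fun i => h (S i) - h i) k.
Proof.
  revert k; induction j as [|j IH]; intros k; [reflexivity|].
  change (fdiff (S (S j)) h k) with (fdiff (S j) h (S k) - fdiff (S j) h k).
  now rewrite !IH.
Qed.

Lemma fdiff_sub j f g k : fdiff j (fun i => f i - g i) k = fdiff j f k - fdiff j g k.
Proof. revert k; induction j as [|j IH]; intros k; simpl; rewrite ?IH; ring. Qed.

Lemma fdiff_abs_le j h k B :
  (forall i, (i <= j)%nat -> Rabs (h (k + i)%nat) <= B) -> Rabs (fdiff j h k) <= 2 ^ j * B.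
Proof.
  revert k; induction j as [|j IH]; intros k Hh; simpl.
  - specialize (Hh 0%nat (le_n 0)). rewrite Nat.add_0_r in Hh. lra.
  - assert (H1 : Rabs (fdiff j h (S k)) <= 2 ^ j * B).
    { apply IH. intros i Hi. replace (S k + i)%nat with (k + S i)%nat by lia. apply Hh. lia. }
    assert (H2 : Rabs (fdiff j h k) <= 2 ^ j * B) by (apply IH; intros i Hi; apply Hh; lia).
    eapply Rle_trans; [apply Rabs_triang|]. rewrite Rabs_Ropp. lra.
Qed.

Lemma fdiff_IZR_small j z k :
  Rabs (fdiff j (fun i => IZR (z i)) k) < 1 -> fdiff j (fun i => IZR (z i)) k = 0.
Proof.
  assert (Hint : exists n, fdiff j (fun i => IZR (z i)) k = IZR n).
  { revert k; induction j as [|j IH]; intros k; simpl; [now exists (z k)|].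
    destruct (IH (S k)) as [a ->], (IH k) as [b ->]. exists (a - b)%Z. now rewrite minus_IZR. }
  destruct Hint as [n ->]. intros Hn. apply Rabs_def2 in Hn as [H1 H2].
  assert (n < 1)%Z by (apply lt_IZR; exact H1). assert (-1 < n)%Z by (apply lt_IZR; exact H2).
  now replace n with 0%Z by lia.
Qed.

Definition sgn (x : R) : bool := if Rle_dec 0 x then true else false.

Fixpoint signs (h : nat -> R) (a len : nat) : list bool :=
  match len with
  | O => []
  | S l => sgn (h a) :: signs h (S a) l
  end.

Lemma length_signs h a len : length (signs h a len) = len.
Proof. revert a; induction len; intros a; simpl; auto. Qed.

Lemma nth_signs h a len i b : (i < len)%nat -> nth i (signs h a len) b = sgn (h (a + i)%nat).
Proof.
  revert a i; induction len as [|len IH]; intros a [|i] Hi; try lia; simpl.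
  - now rewrite Nat.add_0_r.
  - rewrite IH by lia. now rewrite Nat.add_succ_comm.
Qed.

Lemma signs_map h a len : signs h a len = map (fun k => sgn (h k)) (seq a len).
Proof. revert a; induction len as [|len IH]; intros a; simpl; rewrite ?IH; reflexivity. Qed.

Lemma sign_changes_signs_le j h a len :
  (forall i, (i + j < len)%nat -> 0 <= fdiff j h (a + i)) ->
  (sign_changes (signs h a len) <= j)%nat.
Proof.
  revert h a len; induction j as [|j IH]; intros h a len Hpos.
  - rewrite sign_changes_const; [lia|]. intros x Hx.
    apply (In_nth _ _ false) in Hx as (i & Hi & <-). rewrite length_signs in Hi.
    rewrite nth_signs by lia. unfold sgn.
    destruct (Rle_dec 0 (h (a + i)%nat)) as [|Hneg]; [reflexivity|].
    exfalso. apply Hneg, Hpos. lia.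
  - destruct len as [|len]; [simpl; lia|].
    set (dh := fun i => h (S i) - h i).
    assert (IHd : (sign_changes (signs dh a len) <= j)%nat).
    { apply IH. intros i Hi. unfold dh. rewrite <- fdiff_succ. apply Hpos. lia. }
    change (signs h a (S len)) with (sgn (h a) :: signs h (S a) len).
    etransitivity; [apply (sign_changes_rolle _ (signs dh a len))|].
    + now rewrite !length_signs.
    + intros i Hi Hne. rewrite length_signs in Hi.
      change (sgn (h a) :: signs h (S a) len) with (signs h a (S len)) in Hne.
      rewrite !nth_signs in * by lia. unfold dh, sgn in *.
      replace (S a + i)%nat with (S (a + i)) in * by lia.
      destruct (Rle_dec 0 (h (a + i)%nat)), (Rle_dec 0 (h (S (a + i)))),
        (Rle_dec 0 (h (S (a + i)) - h (a + i)%nat)); congruence || lra.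
    + etransitivity; [apply sign_changes_cons_le|]. lia.
Qed.

(* Difference table of the integer sequence whose [i]-th difference at [0] is
   [q i] for [i <= d] and whose [d]-th difference is constant: [table d q k i]
   is its [i]-th difference at [k]. *)
Fixpoint table (d : nat) (q : nat -> Z) (k i : nat) : Z :=
  match k with
  | O => q i
  | S k' => if Nat.ltb i d then (table d q k' i + table d q k' (S i))%Z else table d q k' i
  end.

Lemma table_linear d a b z k i :
  table d (fun i => a i + z * b i)%Z k i = (table d a k i + z * table d b k i)%Z.
Proof. revert i; induction k; intros i; simpl; [|destruct (Nat.ltb i d); rewrite ?IHk]; lia. Qed.

Lemma table_ext d q1 q2 k i :
  (forall i, (i <= d)%nat -> q1 i = q2 i) -> (i <= d)%nat -> table d q1 k i = table d q2 k i.
Proof.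
  intros Heq. revert i; induction k; intros i Hi; simpl; [auto|].
  destruct (Nat.ltb i d) eqn:E; [apply Nat.ltb_lt in E; rewrite !IHk|apply IHk]; lia.
Qed.

Lemma pow_succ_add_le x p : 0 <= x -> x ^ S p + x ^ p <= (x + 1) ^ S p.
Proof.
  intros Hx. simpl.
  assert (x ^ p <= (x + 1) ^ p) by (apply pow_incr; lra).
  assert (0 <= x ^ p) by (apply pow_le; lra).
  nra.
Qed.

Lemma table_approx d G q Mr tau K :
  0 < Mr -> 0 <= tau ->
  (forall i, (i <= d)%nat -> Rabs (fdiff i G 0 - IZR (q i) / Mr) <= / Mr) ->
  (forall k, (k < K)%nat -> Rabs (fdiff (S d) G k) <= tau) ->
  forall k i, (k <= K)%nat -> (i <= d)%nat ->
  Rabs (fdiff i G k - IZR (table d q k i) / Mr) <= INR (k + 1) ^ (d - i) * (/ Mr + INR k * tau).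
Proof.
  intros HMr Htau Hq HG k. induction k as [|k IH]; intros i Hk Hi.
  - simpl. rewrite pow1. specialize (Hq i Hi). lra.
  - assert (Hgrow : / Mr + INR k * tau <= / Mr + INR (S k) * tau)
      by (rewrite S_INR; nra).
    assert (Hgap : / Mr + INR k * tau + tau = / Mr + INR (S k) * tau) by (rewrite S_INR; ring).
    assert (HX : 0 <= / Mr + INR k * tau)
      by (pose proof (Rinv_0_lt_compat _ HMr); pose proof (pos_INR k); nra).
    simpl table. destruct (Nat.ltb i d) eqn:E.
    + apply Nat.ltb_lt in E.
      pose proof (IH i ltac:(lia) ltac:(lia)) as Ei.
      pose proof (IH (S i) ltac:(lia) ltac:(lia)) as ESi.
      replace (fdiff i G (S k) - IZR (table d q k i + table d q k (S i)) / Mr)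
        with ((fdiff i G k - IZR (table d q k i) / Mr) + (fdiff (S i) G k - IZR (table d q k (S i)) / Mr))
        by (rewrite plus_IZR; simpl; field; lra).
      eapply Rle_trans; [apply Rabs_triang|].
      replace (d - i)%nat with (S (d - S i)) in * by lia.
      pose proof (pow_succ_add_le (INR (k + 1)) (d - S i) (pos_INR _)) as Hp.
      replace (INR (k + 1) + 1) with (INR (S k + 1)) in Hp by (rewrite !plus_INR, S_INR; ring).
      assert (0 <= INR (k + 1) ^ (d - S i)) by (apply pow_le, pos_INR).
      assert (0 <= INR (S k + 1) ^ S (d - S i)) by (apply pow_le, pos_INR).
      nra.
    + apply Nat.ltb_ge in E. replace i with d in * by lia.
      pose proof (IH d ltac:(lia) ltac:(lia)) as Ed. pose proof (HG k ltac:(lia)) as Hk'.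
      rewrite Nat.sub_diag in *. simpl pow in *.
      replace (fdiff d G (S k) - IZR (table d q k d) / Mr)
        with ((fdiff d G k - IZR (table d q k d) / Mr) + fdiff (S d) G k) by (simpl; ring).
      eapply Rle_trans; [apply Rabs_triang|]. lra.
Qed.

Lemma table_approx_uniform d G q Mr tau K :
  0 < Mr -> 0 <= tau ->
  (forall i, (i <= d)%nat -> Rabs (fdiff i G 0 - IZR (q i) / Mr) <= / Mr) ->
  (forall k, (k < K)%nat -> Rabs (fdiff (S d) G k) <= tau) ->
  forall k, (k < K)%nat -> Rabs (G k - IZR (table d q k 0) / Mr) <= INR K ^ d * (/ Mr + INR K * tau).
Proof.
  intros HMr Htau Hq HG k Hk.
  eapply Rle_trans; [apply (table_approx d G q Mr tau K HMr Htau Hq HG k 0); lia|].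
  rewrite Nat.sub_0_r.
  assert (HkK : INR (k + 1) <= INR K) by (apply le_INR; lia).
  assert (INR k <= INR K) by (apply le_INR; lia).
  apply Rmult_le_compat.
  - apply pow_le, pos_INR.
  - pose proof (Rinv_0_lt_compat _ HMr); pose proof (pos_INR k); nra.
  - apply pow_incr. split; [apply pos_INR|exact HkK].
  - nra.
Qed.

(** * Finite differences of [n ^ c] *)

Fixpoint rfdiff (j : nat) (f : R -> R) (x : R) : R :=
  match j with
  | O => f x
  | S j' => rfdiff j' f (x + 1) - rfdiff j' f x
  end.

Lemma fdiff_INR j f n k : fdiff j (fun i => f (INR (n + i))) k = rfdiff j f (INR (n + k)).
Proof.
  revert k; induction j as [|j IH]; intros k; simpl; [reflexivity|].
  rewrite !IH, <- S_INR. now replace (n + S k)%nat with (S (n + k)) by lia.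
Qed.

Lemma derivable_pt_lim_rfdiff j f f' x :
  (forall t, 0 < t -> derivable_pt_lim f t (f' t)) -> 0 < x ->
  derivable_pt_lim (rfdiff j f) x (rfdiff j f' x).
Proof.
  revert x; induction j as [|j IH]; intros x Hf Hx; simpl; [auto|].
  apply (derivable_pt_lim_minus (fun y => rfdiff j f (y + 1)) (rfdiff j f)); [|auto].
  rewrite <- (Rmult_1_r (rfdiff j f' (x + 1))).
  apply (derivable_pt_lim_comp (fun y => y + 1) (rfdiff j f)); [|apply IH; auto; lra].
  change (derivable_pt_lim (plus_fct id (fct_cte 1)) x 1).
  replace 1 with (1 + 0) at 2 by ring.
  apply derivable_pt_lim_plus; [apply derivable_pt_lim_id|apply derivable_pt_lim_const].
Qed.

Lemma rfdiff_mvt j (F : nat -> R -> R) x :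
  (forall i t, 0 < t -> derivable_pt_lim (F i) t (F (S i) t)) -> 0 < x ->
  exists xi, x <= xi <= x + INR j /\ rfdiff j (F 0%nat) x = F j xi.
Proof.
  revert F x; induction j as [|j IH]; intros F x HF Hx.
  - exists x. simpl. split; [lra|reflexivity].
  - destruct (MVT_cor2 (rfdiff j (F 0%nat)) (rfdiff j (F 1%nat)) x (x + 1))
      as (eta & Heta & Hbounds); [lra| |].
    { intros t Ht. apply derivable_pt_lim_rfdiff; [|lra]. intros u Hu. now apply HF. }
    destruct (IH (fun i => F (S i)) eta) as (xi & Hxi & Eq); [intros i; apply HF|lra|].
    exists xi. rewrite S_INR. split; [lra|].
    simpl rfdiff. rewrite Heta, Eq. ring_simplify. reflexivity.
Qed.

Fixpoint falling (c : R) (i : nat) : R :=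
  match i with
  | O => 1
  | S i' => falling c i' * (c - INR i')
  end.

Definition pow_deriv (c : R) (i : nat) (t : R) : R := falling c i * Rpower t (c - INR i).

Lemma derivable_pt_lim_pow_deriv c i t :
  0 < t -> derivable_pt_lim (pow_deriv c i) t (pow_deriv c (S i) t).
Proof.
  intros Ht. unfold pow_deriv.
  replace (falling c (S i) * Rpower t (c - INR (S i)))
    with (falling c i * ((c - INR i) * Rpower t (c - INR i - 1)))
    by (rewrite S_INR; simpl; replace (c - (INR i + 1)) with (c - INR i - 1) by ring; ring).
  apply (derivable_pt_lim_scal (fun t => Rpower t (c - INR i))), derivable_pt_lim_power, Ht.
Qed.

Lemma falling_pos c d i : INR d < c -> (i <= S d)%nat -> 0 < falling c i.
Proof.
  intros Hc. induction i as [|i IH]; intros Hi; simpl; [lra|].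
  apply Rmult_lt_0_compat; [apply IH; lia|].
  assert (INR i <= INR d) by (apply le_INR; lia). lra.
Qed.

Lemma Rpower_pos x e : 0 < Rpower x e.
Proof. apply exp_pos. Qed.

Lemma Rpower_le_neg x y e : 0 < x -> x <= y -> e < 0 -> Rpower y e <= Rpower x e.
Proof.
  intros Hx Hxy He. rewrite <- (Ropp_involutive e), (Rpower_Ropp y), (Rpower_Ropp x).
  apply Rinv_le_contravar; [apply Rpower_pos|]. apply Rle_Rpower_l; lra.
Qed.

Lemma Rpower_neg_small e K tau :
  e < 0 -> 0 < K -> 0 < tau -> exists X, 0 < X /\ forall x, X <= x -> K * Rpower x e <= tau.
Proof.
  intros He HK Htau. set (X := Rpower (K / tau) (/ - e)).
  assert (HX : 0 < X) by apply Rpower_pos.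
  exists X. split; [exact HX|]. intros x Hx.
  assert (HXe : Rpower X e = tau / K).
  { unfold X. rewrite Rpower_mult.
    replace (/ - e * e) with (Ropp 1) by (field; lra).
    rewrite Rpower_Ropp, Rpower_1 by (apply Rdiv_lt_0_compat; lra). field; lra. }
  pose proof (Rpower_le_neg X x e HX Hx He) as Hle. rewrite HXe in Hle.
  apply (Rmult_le_compat_l K) in Hle; [|lra].
  replace (K * (tau / K)) with tau in Hle by (field; lra). exact Hle.
Qed.

(* By the iterated mean value theorem the difference is a value of the [(d+1)]-th
   derivative of [t ^ c], which is positive and tends to [0] as [c - d - 1 < 0]. *)
Lemma fdiff_npow_small c d tau :
  INR d < c -> c < INR d + 1 -> 0 < tau ->
  exists N0, forall n j, (N0 <= n)%nat -> 0 < fdiff (S d) (fun k => npow (n + k) c) j <= tau.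
Proof.
  intros Hc1 Hc2 Htau.
  set (e := c - INR (S d)).
  assert (He : e < 0) by (unfold e; rewrite S_INR; lra).
  assert (HK : 0 < falling c (S d)) by (apply (falling_pos c d); auto).
  destruct (Rpower_neg_small e _ tau He HK Htau) as (X & HX & Hsmall).
  destruct (INR_unbounded X) as [N0 HN0].
  exists N0. intros n j Hn.
  assert (Hpos : (0 < n)%nat) by (apply INR_lt; pose proof (le_INR _ _ Hn); simpl; lra).
  rewrite (fdiff_ext _ _ (fun k => pow_deriv c 0 (INR (n + k)))).
  2:{ intros k. unfold npow, pow_deriv. destruct (n + k)%nat eqn:E; [lia|].
      simpl. now rewrite Rminus_0_r, Rmult_1_l. }
  rewrite fdiff_INR.
  assert (Hx : 0 < INR (n + j)) by (apply lt_0_INR; lia).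
  destruct (rfdiff_mvt (S d) (pow_deriv c) _ (derivable_pt_lim_pow_deriv c) Hx)
    as (xi & Hxi & ->).
  unfold pow_deriv. fold e. split.
  - apply Rmult_lt_0_compat; [exact HK|apply Rpower_pos].
  - assert (HnX : X <= INR (n + j)) by (pose proof (le_INR N0 (n + j) ltac:(lia)); lra).
    specialize (Hsmall _ HnX).
    pose proof (Rpower_le_neg (INR (n + j)) xi e Hx ltac:(lra) He) as Hmono.
    apply (Rmult_le_compat_l (falling c (S d))) in Hmono; lra.
Qed.

(** * Candidate blocks *)

Lemma Rabs_le_inv a b : Rabs a <= b -> - b <= a <= b.
Proof. unfold Rabs. destruct (Rcase_abs a); lra. Qed.

Lemma Zfloor_near p W y :
  2 * W < 1 -> Rabs (y - p) <= W ->
  let u := Zfloor (p + W) in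
  (Zfloor (p - W) = u -> Zfloor y = u) /\
  (Zfloor (p - W) <> u ->
     Rabs (IZR u - y) <= 2 * W /\ Zfloor y = if sgn (y - IZR u) then u else (u - 1)%Z).
Proof.
  intros HW Hy u. apply Rabs_le_inv in Hy.
  pose proof (Zfloor_bound (p + W)) as Bu. pose proof (Zfloor_bound (p - W)) as Bl.
  fold u in Bu.
  assert (Hl : (Zfloor (p - W) <= Zfloor y)%Z) by (apply Zfloor_le; lra).
  assert (Hu : (Zfloor y <= u)%Z) by (apply Zfloor_le; lra).
  assert (Hgap : (u < Zfloor (p - W) + 2)%Z)
    by (apply lt_IZR; rewrite plus_IZR; simpl; lra).
  split; [lia|]. intros Hne.
  assert (Elu : Zfloor (p - W) = (u - 1)%Z) by lia.
  rewrite Elu, minus_IZR in Bl. simpl in Bl.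
  split; [apply Rabs_le; lra|].
  unfold sgn. destruct (Rle_dec 0 (y - IZR u)).
  - assert ((u <= Zfloor y)%Z) by (apply Zfloor_lub; lra). lia.
  - pose proof (Zfloor_bound y).
    assert ((Zfloor y < u)%Z) by (apply lt_IZR; lra). lia.
Qed.

(* The digits of a block of length [r * T] are reconstructed from [D], the first
   [d + 1] differences of [M G] at [0] (rounded and reduced mod [m M]), and one
   bit per position, which only matters where [D] leaves the floor ambiguous;
   the bits are grouped into [T] segments of length [r]. *)
Section Candidates.

Variables (m d r T M : nat) (W : R).

Definition guess (D : list nat) (k : nat) : R :=
  IZR (table d (fun i => Z.of_nat (nth i D 0%nat)) k 0) / INR M.

Definition upper (D : list nat) (k : nat) : Z := Zfloor (guess D k + W).

Definition ambiguous (D : list nat) (k : nat) : bool :=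
  negb (Z.eqb (Zfloor (guess D k - W)) (upper D k)).

Definition digit (D : list nat) (k : nat) (b : bool) : nat :=
  Z.to_nat ((if (ambiguous D k && negb b)%bool then upper D k - 1 else upper D k) mod Z.of_nat m)%Z.

Definition decode (D : list nat) (bits : list bool) : list nat :=
  map (fun k => digit D k (nth k bits false)) (seq 0 (r * T)).

(* A segment containing an unambiguous position carries a [false] bit there;
   otherwise its bits are signs with few changes. *)
Definition segment_bits (D : list nat) (t : nat) : list (list bool) :=
  match find (fun i => negb (ambiguous D (t * r + i))) (seq 0 r) with
  | Some i => with_false_at i r
  | None => few_changes (r - 1) (S d)
  end.

Fixpoint bit_strings (D : list nat) (t : nat) : list (list bool) :=
  match t with
  | O => [[]]
  | S t' => flat_map (fun pre => map (fun s => pre ++ s) (segment_bits D t')) (bit_strings D t')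
  end.

Definition candidate_blocks : list (list nat) :=
  flat_map (fun D => map (decode D) (bit_strings D T)) (words (seq 0 (m * M)) (S d)).

Lemma length_segment_bits D t :
  (1 <= r)%nat -> (2 * r ^ S d <= 2 ^ (r - 1))%nat ->
  (length (segment_bits D t) <= 2 ^ (r - 1))%nat.
Proof.
  intros Hr Hrd. unfold segment_bits. destruct find.
  - now rewrite length_with_false_at.
  - pose proof (length_few_changes (r - 1) (S d)). replace (S (r - 1)) with r in * by lia. lia.
Qed.

Lemma length_bit_strings D t :
  (1 <= r)%nat -> (2 * r ^ S d <= 2 ^ (r - 1))%nat ->
  (length (bit_strings D t) <= (2 ^ (r - 1)) ^ t)%nat.
Proof.
  intros Hr Hrd. induction t as [|t IH]; simpl; [lia|]. rewrite flat_map_concat_map.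
  etransitivity; [|apply Nat.mul_le_mono_l, IH].
  clear IH. induction (bit_strings D t) as [|pre l IHl]; simpl; [lia|].
  rewrite length_app, length_map, Nat.mul_succ_r. pose proof (length_segment_bits D t Hr Hrd). lia.
Qed.

Lemma length_candidate_blocks :
  (1 <= r)%nat -> (2 * r ^ S d <= 2 ^ (r - 1))%nat ->
  (length candidate_blocks <= (m * M) ^ S d * (2 ^ (r - 1)) ^ T)%nat.
Proof.
  intros Hr Hrd. unfold candidate_blocks.
  replace ((m * M) ^ S d)%nat with (length (words (seq 0 (m * M)) (S d)))
    by now rewrite length_words, length_seq.
  rewrite flat_map_concat_map. induction (words (seq 0 (m * M)) (S d)) as [|D l IH]; simpl; [lia|].
  rewrite length_app, length_map. pose proof (length_bit_strings D T Hr Hrd). lia.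
Qed.

Lemma in_bit_strings D (bit : nat -> bool) t :
  (forall s, (s < t)%nat -> In (map bit (seq (s * r) r)) (segment_bits D s)) ->
  In (map bit (seq 0 (r * t))) (bit_strings D t).
Proof.
  induction t as [|t IH]; intros Hseg; cbn [bit_strings].
  - rewrite Nat.mul_0_r. now left.
  - apply in_flat_map. exists (map bit (seq 0 (r * t))). split; [apply IH; auto|].
    replace (r * S t)%nat with (r * t + r)%nat by lia.
    rewrite seq_app, map_app. apply in_map. rewrite Nat.mul_comm. apply Hseg. lia.
Qed.

Lemma digit_Zfloor D k y s :
  2 * W < 1 -> Rabs (y - IZR (Z.of_nat m * s) - guess D k) <= W ->
  digit D k (ambiguous D k && sgn (y - IZR (upper D k + Z.of_nat m * s)))%bool =
  Z.to_nat (Zfloor y mod Z.of_nat m).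
Proof.
  intros HW Hy. set (y' := y - IZR (Z.of_nat m * s)).
  destruct (Zfloor_near (guess D k) W y' HW Hy) as [Hsure Hamb].
  assert (Hfl : Zfloor y = (Zfloor y' + s * Z.of_nat m)%Z).
  { rewrite Z.mul_comm, <- Zfloor_addz. f_equal. unfold y'. ring. }
  rewrite Hfl, Z_mod_plus_full. unfold digit, ambiguous.
  destruct (Z.eqb_spec (Zfloor (guess D k - W)) (upper D k)) as [E|E]; simpl.
  - now rewrite (Hsure E).
  - destruct (Hamb E) as [_ ->].
    replace (y - IZR (upper D k + Z.of_nat m * s)) with (y' - IZR (upper D k))
      by (unfold y'; rewrite plus_IZR; ring).
    now destruct (sgn _).
Qed.

Lemma ambiguous_near D k y s :
  2 * W < 1 -> Rabs (y - IZR (Z.of_nat m * s) - guess D k) <= W -> ambiguous D k = true ->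
  Rabs (y - IZR (upper D k + Z.of_nat m * s)) <= 2 * W.
Proof.
  intros HW Hy Hamb. unfold ambiguous in Hamb.
  destruct (Zfloor_near (guess D k) W _ HW Hy) as [_ Hnear].
  destruct (Z.eqb_spec (Zfloor (guess D k - W)) (upper D k)) as [E|E]; [discriminate|].
  destruct (Hnear E) as [Hu _]. rewrite Rabs_minus_sym in Hu.
  replace (y - IZR (upper D k + Z.of_nat m * s))
    with (y - IZR (Z.of_nat m * s) - IZR (upper D k)) by (rewrite plus_IZR; ring).
  exact Hu.
Qed.

(* Within a fully ambiguous segment, [G] stays within [2W] of an integer sequence
   [z]; the [(d+1)]-th differences of [z] are then integers of absolute value
   less than [1], hence [0], so [G - z] has nonnegative [(d+1)]-th differences. *)
Lemma segment_in_segment_bits D G z t tau :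
  (1 <= r)%nat -> 2 ^ S d * (2 * W) + tau < 1 ->
  (forall j, 0 <= fdiff (S d) G j <= tau) ->
  (forall k, (t * r <= k < t * r + r)%nat -> ambiguous D k = true ->
     Rabs (G k - IZR (z k)) <= 2 * W) ->
  In (map (fun k => ambiguous D k && sgn (G k - IZR (z k)))%bool (seq (t * r) r)) (segment_bits D t).
Proof.
  intros Hr Hsmall HG Hnear. unfold segment_bits.
  destruct (find (fun i => negb (ambiguous D (t * r + i))) (seq 0 r)) as [i|] eqn:Hfind.
  - apply find_some in Hfind as [Hi Hsure]. apply in_seq in Hi.
    apply Bool.negb_true_iff in Hsure.
    apply in_with_false_at; [now rewrite length_map, length_seq|lia|].
    now rewrite nth_map_seq, Hsure by lia.
  - assert (Hall : forall i, (i < r)%nat -> ambiguous D (t * r + i) = true).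
    { intros i Hi. apply Bool.negb_false_iff.
      exact (find_none _ _ Hfind i ltac:(apply in_seq; lia)). }
    set (h := fun k => G k - IZR (z k)).
    replace (map _ (seq (t * r) r)) with (signs h (t * r) r).
    2:{ rewrite signs_map. apply map_ext_in. intros k Hk. apply in_seq in Hk.
        replace k with (t * r + (k - t * r))%nat by lia. now rewrite Hall by lia. }
    apply in_few_changes; [rewrite length_signs; lia|].
    apply sign_changes_signs_le. intros i Hi. unfold h. rewrite fdiff_sub.
    destruct (HG (t * r + i)%nat) as [HG0 HGtau].
    rewrite (fdiff_IZR_small (S d) z); [lra|].
    replace (fdiff (S d) (fun k => IZR (z k)) (t * r + i))
      with (fdiff (S d) (fun k => IZR (z k) - G k) (t * r + i) + fdiff (S d) G (t * r + i))
      by (rewrite fdiff_sub; ring).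
    assert (Hb : Rabs (fdiff (S d) (fun k => IZR (z k) - G k) (t * r + i)) <= 2 ^ S d * (2 * W)).
    { apply fdiff_abs_le. intros i' Hi'. rewrite Rabs_minus_sym.
      apply Hnear; [lia|]. rewrite <- Nat.add_assoc. apply Hall. lia. }
    eapply Rle_lt_trans; [apply Rabs_triang|]. rewrite (Rabs_pos_eq (fdiff (S d) G _)); lra.
Qed.

Lemma exists_initial_data G tau :
  (1 <= m)%nat -> (1 <= M)%nat -> 0 <= tau ->
  INR (r * T) ^ d * (/ INR M + INR (r * T) * tau) <= W ->
  (forall j, Rabs (fdiff (S d) G j) <= tau) ->
  exists D (s : nat -> Z), In D (words (seq 0 (m * M)) (S d)) /\
    forall k, (k < r * T)%nat -> Rabs (G k - IZR (Z.of_nat m * s k) - guess D k) <= W.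
Proof.
  intros Hm HM Htau HW HG.
  assert (HMr : 0 < INR M) by (apply lt_0_INR; lia).
  set (q := fun i => Zfloor (INR M * fdiff i G 0)).
  set (mM := Z.of_nat (m * M)).
  assert (HmM : (0 < mM)%Z) by (unfold mM; lia).
  set (D := map (fun i => Z.to_nat (q i mod mM)) (seq 0 (S d))).
  exists D, (fun k => table d (fun i => q i / mM) k 0)%Z. split.
  - apply in_words. split; [unfold D; now rewrite length_map, length_seq|].
    intros a Ha. unfold D in Ha. apply in_map_iff in Ha as (i & <- & _).
    apply in_seq. pose proof (Z.mod_pos_bound (q i) mM HmM). unfold mM in *. lia.
  - intros k Hk.
    assert (Hq : forall i, (i <= d)%nat -> Rabs (fdiff i G 0 - IZR (q i) / INR M) <= / INR M).
    { intros i _. pose proof (Zfloor_bound (INR M * fdiff i G 0)) as Hfl. fold (q i) in Hfl.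
      pose proof (Rinv_0_lt_compat _ HMr).
      replace (fdiff i G 0 - IZR (q i) / INR M)
        with ((INR M * fdiff i G 0 - IZR (q i)) * / INR M) by (field; lra).
      rewrite Rabs_mult, (Rabs_pos_eq (/ INR M)), Rabs_pos_eq by lra. nra. }
    pose proof (table_approx_uniform d G q (INR M) tau (r * T) HMr Htau Hq (fun k _ => HG k) k Hk)
      as Happ.
    assert (Htab : table d q k 0 = (table d (fun i => Z.of_nat (nth i D 0%nat)) k 0
                                   + mM * table d (fun i => q i / mM) k 0)%Z).
    { rewrite <- table_linear. apply table_ext; [|lia]. intros i Hi.
      unfold D. rewrite nth_map_seq by lia. simpl.
      rewrite Z2Nat.id by (apply Z.mod_pos_bound; lia).
      pose proof (Z_div_mod_eq_full (q i) mM). lia. }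
    replace (G k - IZR (Z.of_nat m * table d (fun i => (q i / mM)%Z) k 0) - guess D k)
      with (G k - IZR (table d q k 0) / INR M); [lra|].
    rewrite Htab, plus_IZR, !mult_IZR. unfold guess, mM.
    rewrite Nat2Z.inj_mul, mult_IZR, <- !INR_IZR_INZ. field. lra.
Qed.

Lemma block_in_candidate_blocks G tau :
  (1 <= r)%nat -> (1 <= m)%nat -> (1 <= M)%nat -> 0 <= tau -> 2 ^ S d * (2 * W) + tau < 1 ->
  INR (r * T) ^ d * (/ INR M + INR (r * T) * tau) <= W ->
  (forall j, 0 <= fdiff (S d) G j <= tau) ->
  In (map (fun k => Z.to_nat (Zfloor (G k) mod Z.of_nat m)) (seq 0 (r * T))) candidate_blocks.
Proof.
  intros Hr Hm HM Htau Hsmall HW HG.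
  assert (HW1 : 2 * W < 1).
  { pose proof (pow_R1_Rle 2 (S d) ltac:(lra)). destruct (Rle_lt_dec 0 W); nra. }
  destruct (exists_initial_data G tau Hm HM Htau HW) as (D & s & HD & Happ).
  { intros j. destruct (HG j). rewrite Rabs_pos_eq; lra. }
  set (z := fun k => (upper D k + Z.of_nat m * s k)%Z).
  set (bit := fun k => (ambiguous D k && sgn (G k - IZR (z k)))%bool).
  apply in_flat_map. exists D. split; [exact HD|].
  apply in_map_iff. exists (map bit (seq 0 (r * T))). split.
  - unfold decode. apply map_ext_in. intros k Hk. apply in_seq in Hk.
    rewrite nth_map_seq by lia. apply digit_Zfloor; [exact HW1|]. apply Happ. lia.
  - apply in_bit_strings. intros t Ht. apply (segment_in_segment_bits D G z t tau Hr Hsmall HG).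
    intros k Hk Hamb. apply ambiguous_near; auto. apply Happ. nia.
Qed.

End Candidates.

(** * Missing blocks *)

Lemma exists_exp_dominates A e : exists T, (1 <= T)%nat /\ (A * T ^ e < 2 ^ T)%nat.
Proof.
  set (s := (A + e + 4)%nat). exists (2 ^ s)%nat.
  pose proof (Nat.pow_gt_lin_r 2 s ltac:(lia)). split; [lia|].
  rewrite <- Nat.pow_mul_r.
  assert (Hs : (A + s * e <= 2 ^ s)%nat).
  { enough (s * s <= 2 ^ s)%nat by (unfold s in *; nia).
    assert (Hs4 : (4 <= s)%nat) by (unfold s; lia). clear -Hs4.
    induction Hs4 as [|s Hs IH]; [simpl; lia|]. rewrite Nat.pow_succ_r'. nia. }
  pose proof (Nat.pow_gt_lin_r 2 A ltac:(lia)).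
  pose proof (Nat.pow_le_mono_r 2 _ _ ltac:(lia) Hs). rewrite Nat.pow_add_r in *.
  assert (0 < 2 ^ (s * e))%nat by (apply Nat.neq_0_lt_0, Nat.pow_nonzero; lia). nia.
Qed.

Lemma exists_nat_between c : 0 < c -> (forall z : Z, c <> IZR z) -> exists d, INR d < c < INR d + 1.
Proof.
  intros Hc Hnz. pose proof (Zfloor_bound c) as [Hlo Hhi].
  assert (Hpos : (0 <= Zfloor c)%Z) by (apply Zfloor_lub; simpl; lra).
  exists (Z.to_nat (Zfloor c)). rewrite INR_IZR_INZ, Z2Nat.id by exact Hpos.
  split; [|lra]. destruct Hlo as [|E]; [assumption|]. now destruct (Hnz (Zfloor c)).
Qed.

Lemma parameters_fit d L :
  (1 <= L)%nat ->
  let M := (2 ^ (d + 4) * L ^ d)%nat in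
  let W := / 2 ^ (d + 3) in
  let tau := / (INR M * INR L) in
  0 < tau /\ 2 ^ S d * (2 * W) + tau < 1 /\ INR L ^ d * (/ INR M + INR L * tau) <= W.
Proof.
  intros HL M W tau.
  assert (HLr : 1 <= INR L) by (apply (le_INR 1); exact HL).
  assert (HLd : 1 <= INR L ^ d) by (apply pow_R1_Rle; lra).
  assert (H2d : 1 <= 2 ^ d) by (apply pow_R1_Rle; lra).
  assert (HMr : INR M = 2 ^ d * 16 * INR L ^ d).
  { unfold M. rewrite mult_INR, !pow_INR, pow_add. replace (INR 2) with 2 by (simpl; lra). ring. }
  assert (HM16 : 16 <= INR M) by (rewrite HMr; nra).
  assert (Htau : 0 < tau) by (unfold tau; apply Rinv_0_lt_compat; nra).
  unfold W. rewrite pow_add. split; [exact Htau|split].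
  - assert (tau <= / 16).
    { unfold tau. apply Rinv_le_contravar; [lra|nra]. }
    replace (2 ^ S d * (2 * / (2 ^ d * 2 ^ 3))) with (/ 2) by (cbn [pow]; field; lra). lra.
  - unfold tau. rewrite HMr. right. field. lra.
Qed.

Definition block_at (v : nat -> nat) (n len : nat) : list nat := map (fun i => v (n + i)%nat) (seq 0 len).

Lemma Int_part_Zfloor x : Int_part x = Zfloor x.
Proof. unfold Int_part. rewrite up_Zfloor. lia. Qed.

Lemma block_at_floor_pow_mod m c n L :
  block_at (floor_pow_mod m c) n L =
  map (fun k => Z.to_nat (Zfloor (npow (n + k) c) mod Z.of_nat m)) (seq 0 L).
Proof.
  apply map_ext. intros k. unfold floor_pow_mod, rfloor. now rewrite Int_part_Zfloor.
Qed.

Lemma floor_pow_mod_blocks_in_candidates m c d r T :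
  (1 <= m)%nat -> INR d < c < INR d + 1 -> (1 <= r)%nat -> (1 <= T)%nat ->
  exists N0, forall n, (N0 <= n)%nat ->
    In (block_at (floor_pow_mod m c) n (r * T))
       (candidate_blocks m d r T (2 ^ (d + 4) * (r * T) ^ d) (/ 2 ^ (d + 3))).
Proof.
  intros Hm [Hc1 Hc2] Hr HT.
  destruct (parameters_fit d (r * T) ltac:(nia)) as (Htau & Hsmall & Happrox).
  set (tau := / (INR (2 ^ (d + 4) * (r * T) ^ d) * INR (r * T))) in *.
  destruct (fdiff_npow_small c d tau Hc1 Hc2 Htau) as [N0 HN0].
  exists N0. intros n Hn. rewrite block_at_floor_pow_mod.
  apply (block_in_candidate_blocks m d r T _ _ (fun k => npow (n + k) c) tau Hr Hm); try lra.
  - pose proof (Nat.pow_nonzero 2 (d + 4) ltac:(lia)).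
    pose proof (Nat.pow_nonzero (r * T) d ltac:(nia)). nia.
  - intros j. destruct (HN0 n j Hn). lra.
Qed.

Lemma length_candidate_blocks_lt m d r T W :
  (2 <= m)%nat -> (1 <= r)%nat -> (2 * r ^ S d <= 2 ^ (r - 1))%nat ->
  ((m * 2 ^ (d + 4) * r ^ d) ^ S d * T ^ (d * S d) < 2 ^ T)%nat ->
  (length (candidate_blocks m d r T (2 ^ (d + 4) * (r * T) ^ d) W) < m ^ (r * T))%nat.
Proof.
  intros Hm Hr Hrd HT.
  eapply Nat.le_lt_trans; [apply length_candidate_blocks; assumption|].
  replace ((m * (2 ^ (d + 4) * (r * T) ^ d)) ^ S d)%nat
    with ((m * 2 ^ (d + 4) * r ^ d) ^ S d * T ^ (d * S d))%nat
    by (rewrite !Nat.pow_mul_l, <- !Nat.pow_mul_r; ring).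
  assert (Hm2 : (2 ^ T * (2 ^ (r - 1)) ^ T <= m ^ (r * T))%nat).
  { rewrite <- Nat.pow_mul_l, <- Nat.pow_succ_r', Nat.pow_mul_r.
    replace (S (r - 1)) with r by lia. apply Nat.pow_le_mono_l, Nat.pow_le_mono_l. lia. }
  assert (0 < (2 ^ (r - 1)) ^ T)%nat by (apply Nat.neq_0_lt_0, Nat.pow_nonzero, Nat.pow_nonzero; lia).
  nia.
Qed.

Lemma floor_pow_mod_eventually_avoids m c :
  (2 <= m)%nat -> 1 < c -> (forall z : Z, c <> IZR z) ->
  exists N0 L B, In B (words (seq 0 m) L) /\
    forall n, (N0 <= n)%nat -> block_at (floor_pow_mod m c) n L <> B.
Proof.
  intros Hm Hc Hnz.
  destruct (exists_nat_between c ltac:(lra) Hnz) as [d Hd].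
  destruct (exists_exp_dominates 4 (S d)) as (r & Hr & Hr').
  assert (Hrd : (2 * r ^ S d <= 2 ^ (r - 1))%nat).
  { destruct r as [|r]; [lia|].
    rewrite (Nat.pow_succ_r' 2 r) in Hr'. rewrite Nat.sub_succ, Nat.sub_0_r. lia. }
  destruct (exists_exp_dominates ((m * 2 ^ (d + 4) * r ^ d) ^ S d) (d * S d)) as (T & HT & HT').
  destruct (floor_pow_mod_blocks_in_candidates m c d r T ltac:(lia) Hd Hr HT) as [N0 HN0].
  destruct (exists_word_not_in (seq 0 m) (r * T)
              (candidate_blocks m d r T (2 ^ (d + 4) * (r * T) ^ d) (/ 2 ^ (d + 3))))
    as (B & HB & HBnot).
  { apply seq_NoDup. }
  { rewrite length_seq. now apply length_candidate_blocks_lt. }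
  exists N0, (r * T)%nat, B. split; [exact HB|].
  intros n Hn E. apply HBnot. rewrite <- E. now apply HN0.
Qed.

Lemma occursb_block_at v B n : occursb v B n = true -> block_at v n (length B) = B.
Proof.
  unfold occursb, block_at. rewrite forallb_forall. intros Hall.
  apply nth_ext with (d := 0%nat) (d' := 0%nat); rewrite length_map, length_seq; [reflexivity|].
  intros i Hi. rewrite nth_map_seq by lia. apply Nat.eqb_eq, Hall, in_seq. lia.
Qed.

Lemma block_at_add v n a b : block_at v n (a + b) = block_at v n a ++ block_at v (n + a) b.
Proof.
  unfold block_at. rewrite seq_app, map_app. f_equal.
  apply nth_ext with (d := 0%nat) (d' := 0%nat); rewrite !length_map, !length_seq; [reflexivity|].
  intros i Hi. rewrite !nth_map_seq by lia. f_equal. lia.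
Qed.

Lemma app_inv_length {A : Type} (a c b e : list A) :
  length a = length c -> a ++ b = c ++ e -> a = c /\ b = e.
Proof.
  revert c; induction a as [|x a IH]; intros [|y c] Hl E; simpl in *; try easy.
  injection E as -> E. destruct (IH c ltac:(lia) E) as [-> ->]. auto.
Qed.

(* If no block at position [>= N0] equals [B0], then [B0 ++ w] never occurs,
   where [w] is any word of length [N0] differing from all the blocks of length
   [N0] at positions [n + L] with [n < N0]. *)
Lemma missing_block_of_eventually_avoided m (v : nat -> nat) N0 L B0 :
  (2 <= m)%nat -> In B0 (words (seq 0 m) L) ->
  (forall n, (N0 <= n)%nat -> block_at v n L <> B0) ->
  exists k B, (0 < k)%nat /\ is_block m k B /\ forall n, occursb v B n = false.
Proof.
  intros Hm HB0 Havoid. apply in_words in HB0 as [HB0l HB0m].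
  set (early := map (fun n => block_at v (n + L) N0) (seq 0 N0)).
  destruct (exists_word_not_in (seq 0 m) N0 early) as (w & Hw & Hwnot).
  { apply seq_NoDup. }
  { unfold early. rewrite !length_map, !length_seq.
    pose proof (Nat.pow_gt_lin_r 2 N0 ltac:(lia)). pose proof (Nat.pow_le_mono_l 2 m N0 Hm). lia. }
  apply in_words in Hw as [Hwl Hwm].
  assert (HL : (0 < L + N0)%nat).
  { destruct L; [|lia]. destruct B0; [|discriminate]. now destruct (Havoid N0). }
  exists (L + N0)%nat, (B0 ++ w). split; [exact HL|split].
  - split; [rewrite length_app; lia|]. apply Forall_forall. intros x Hx.
    apply in_app_or in Hx as [Hx|Hx]; [apply HB0m in Hx|apply Hwm in Hx];
      apply in_seq in Hx; lia.
  - intros n. destruct (occursb v (B0 ++ w) n) eqn:E; [exfalso|reflexivity].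
    apply occursb_block_at in E. rewrite length_app, HB0l, Hwl, block_at_add in E.
    apply app_inv_length in E as [E1 E2]; [|unfold block_at; now rewrite length_map, length_seq].
    destruct (le_lt_dec N0 n) as [Hn|Hn].
    + exact (Havoid n Hn E1).
    + apply Hwnot. rewrite <- E2. apply (in_map (fun n => block_at v (n + L) N0)), in_seq. lia.
Qed.

Lemma not_normal_of_missing_block m k (v : nat -> nat) B :
  (1 <= m)%nat -> (0 < k)%nat -> is_block m k B -> (forall n, occursb v B n = false) ->
  ~ normal m v.
Proof.
  intros Hm Hk HB Hocc Hnorm.
  assert (Hzero : Un_cv (fun N => INR (block_count v B N) / INR N) 0).
  { intros eps Heps. exists 0%nat. intros n _. unfold block_count, R_dist.
    rewrite (filter_ext _ _ Hocc), filter_false.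
    simpl. unfold Rdiv. rewrite Rmult_0_l, Rminus_0_r, Rabs_R0. exact Heps. }
  pose proof (UL_sequence _ _ _ (Hnorm k Hk B HB) Hzero) as E.
  assert (Hmk : 0 < INR m ^ k) by (apply pow_lt, lt_0_INR; lia).
  pose proof (Rinv_0_lt_compat _ Hmk). lra.
Qed.

Theorem theorem2 (m : nat) (c : R) :
  (2 <= m)%nat -> 1 < c -> (forall z : Z, c <> IZR z) ->
  ~ normal m (floor_pow_mod m c) /\
  exists (k : nat) (B : list nat),
    (0 < k)%nat /\ is_block m k B /\
    forall n : nat, occursb (floor_pow_mod m c) B n = false.
Proof.
  intros Hm Hc Hnz.
  destruct (floor_pow_mod_eventually_avoids m c Hm Hc Hnz) as (N0 & L & B0 & HB0 & Havoid).
  destruct (missing_block_of_eventually_avoided m _ N0 L B0 Hm HB0 Havoid)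
    as (k & B & Hk & HB & Hocc).
  split.
  - exact (not_normal_of_missing_block m k _ B ltac:(lia) Hk HB Hocc).
  - now exists k, B.
Qed.
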